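(* Let $N\ge1$ and $z\in\mathbb{C}^N$ with $z_j-z_k\notin i\pi\mathbb{Z}$ for $j\neq k$. Define the $N\times N$ matrix $Q$ by $$Q_{jk}=-\delta_{jk}\sum_{n\ne j}\coth(z_j-z_n)+(1-\delta_{jk})\frac{1}{\sinh(z_j-z_k)}.$$ Then $Q$ has spectrum $\{-N+1,-N+3,\ldots,N-3,N-1\}$ (i.e. its characteristic polynomial equals $\prod_{j=1}^N(\lambda-(2j-1-N))$). *)

From HB Require Import structures.
From mathcomp Require Import all_boot all_order all_algebra.
From mathcomp Require Import complex.
From mathcomp Require Import reals.
From mathcomp.analysis Require Import sequences exp trigo.
Set Implicit Arguments. Unset Strict Implicit. Unset Printing Implicit Defensive.
Import Order.TTheory GRing.Theory Num.Theory.
Local Open Scope ring_scope.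
Local Open Scope complex_scope.

Section ComplexHyperbolic.
Variable R : realType.

Definition cexp (z : R[i]) : R[i] :=
  (expR (@complex.Re R z) * cos (@complex.Im R z)) +i* (expR (@complex.Re R z) * sin (@complex.Im R z)).

Definition csinh (z : R[i]) : R[i] := (cexp z - cexp (- z)) / 2%:R.
Definition ccosh (z : R[i]) : R[i] := (cexp z + cexp (- z)) / 2%:R.
Definition ccoth (z : R[i]) : R[i] := ccosh z / csinh z.

Definition in_ipiZ (w : R[i]) : Prop :=
  exists m : int, w = 0 +i* (pi * m%:~R).

Definition Qmat (N : nat) (z : 'I_N -> R[i]) : 'M[R[i]]_N :=
  \matrix_(j < N, k < N)
    (if j == k then - \sum_(n < N | n != j) ccoth (z j - z n)
     else (csinh (z j - z k))^-1).
End ComplexHyperbolic.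

(** With [y k = e^(z k)] and [x k = y k ^+ 2] one has
    [coth (z j - z k) = (x j + x k) / (x j - x k)] and
    [1 / sinh (z j - z k) = 2 y j y k / (x j - x k)], so [Q] is a rational
    matrix in the pairwise distinct numbers [x k] (distinct exactly because
    [z j - z k] avoids [i pi Z]).  The matrix [M j d = y j * x j ^+ d], a
    diagonal matrix times a Vandermonde matrix, is invertible and satisfies
    [Q M = M U] with [U] upper triangular, [U d d = 2 d + 1 - N] (0-based [d])
    and [U a d = - 2 \sum_k x k ^+ (d - a)] above the diagonal: the column
    [d] of [Q M] is computed by a geometric sum. *)
From HB Require Import structures.
From mathcomp Require Import all_boot all_order all_algebra.
From mathcomp Require Import complex.
From mathcomp Require Import reals.
From mathcomp.analysis Require Import sequences exp trigo.
From mathcomp Require Import ring.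
Import Order.TTheory GRing.Theory Num.Theory.
Local Open Scope ring_scope.

Section ComplexExp.
Local Open Scope complex_scope.
Variable R : realType.
Implicit Types u v w : R[i].

Lemma norm_sinDpi_natr (x : R) (n : nat) :
  `|sin (x + pi * n%:R)| = `|sin x|.
Proof.
elim: n => [|n IHn]; first by rewrite mulr0 addr0.
have -> : x + pi * n.+1%:R = (x + pi * n%:R) + pi by rewrite -natr1; ring.
by rewrite sinDpi normrN IHn.
Qed.

Lemma norm_sinDpi_intr (x : R) (m : int) :
  `|sin (x + pi * m%:~R)| = `|sin x|.
Proof.
case: m => n; first exact: norm_sinDpi_natr.
set t := x + _.
have -> : x = t + pi * n.+1%:R by rewrite /t NegzE mulrNz; ring.
by rewrite norm_sinDpi_natr.
Qed.

Lemma sin_eq0_pi_int (b : R) :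
  sin b = 0 -> exists m : int, b = pi * m%:~R.
Proof.
move=> sinb0; have pi_gt0 : 0 < pi :> R := pi_gt0 R.
pose m := Num.floor (b / pi); exists m.
have /andP[m_le] := floor_itv (b / pi); rewrite intrD => m1_gt.
have b_pi : b = pi * (b / pi) by rewrite mulrC divfK // gt_eqF.
set r := b - pi * m%:~R.
have r_ge0 : 0 <= r by rewrite /r b_pi -mulrBr mulr_ge0 ?subr_ge0 // ltW.
have r_ltpi : r < pi.
  by rewrite /r b_pi -mulrBr -[X in _ < X]mulr1 ltr_pM2l // ltrBlDl.
have sinr0 : sin r = 0.
  by apply/normr0_eq0; rewrite -(norm_sinDpi_intr _ m) subrK sinb0 normr0.
have r0 : r = 0.
  apply: le_anti; rewrite r_ge0 andbT leNgt; apply/negP => r_gt0.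
  by have := sin_gt0_pi (x := r); rewrite r_gt0 r_ltpi sinr0 ltxx => /(_ isT).
by apply/eqP; rewrite -subr_eq0 -/r r0.
Qed.

Lemma cexpD u v : cexp (u + v) = cexp u * cexp v.
Proof.
case: u => a b; case: v => c d.
rewrite /cexp /= expRD cosD sinD /=.
by apply/eqP; rewrite eq_complex /=; apply/andP; split; apply/eqP; ring.
Qed.

Lemma cexp0 : cexp (0 : R[i]) = 1.
Proof. by rewrite /cexp /= expR0 cos0 sin0 mulr1 mulr0. Qed.

Lemma cexp_neq0 u : cexp u != 0.
Proof.
apply/eqP => cexp0u; have := cexpD u (- u).
by rewrite subrr cexp0 cexp0u mul0r => /eqP; rewrite oner_eq0.
Qed.

Lemma cexpN u : cexp (- u) = (cexp u)^-1.
Proof.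
apply: (mulfI (cexp_neq0 u)).
by rewrite -cexpD subrr cexp0 mulfV // cexp_neq0.
Qed.

Lemma cexpB u v : cexp (u - v) = cexp u / cexp v.
Proof. by rewrite cexpD cexpN. Qed.

Lemma in_ipiZ_expR_cos_sin (a b : R) :
  (expR a * cos b) ^+ 2 = 1 -> expR a * sin b = 0 -> in_ipiZ (a +i* b).
Proof.
move=> re2 im0.
have sinb0 : sin b = 0.
  by move/eqP: im0; rewrite mulf_eq0 gt_eqF ?expR_gt0 //= => /eqP.
have cos2b : cos b ^+ 2 = 1.
  by have := cos2Dsin2 b; rewrite sinb0 expr0n addr0.
have expa2 : expR a ^+ 2 = 1 by rewrite -re2 exprMn cos2b mulr1.
have a0 : a = 0.
  apply: expR_inj; rewrite expR0.
  by apply/eqP; rewrite -(@eqrXn2 _ 2) ?expR_ge0 // expr1n expa2.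
have [m ->] := sin_eq0_pi_int _ sinb0.
by exists m; rewrite a0.
Qed.

Lemma cexp_sqr_eq1 w : cexp w ^+ 2 = 1 -> in_ipiZ w.
Proof.
case: w => a b /eqP; rewrite sqrf_eq1.
rewrite /cexp !eq_complex /= oppr0 => /orP[]/andP[/eqP re /eqP im];
  by apply: in_ipiZ_expR_cos_sin; rewrite ?re ?im ?sqrrN ?expr1n.
Qed.

Lemma csinhB u v :
  csinh (u - v) = (cexp u ^+ 2 - cexp v ^+ 2) / (2 * cexp u * cexp v).
Proof.
have eu := cexp_neq0 u; have ev := cexp_neq0 v.
by rewrite /csinh cexpN !cexpB; field; rewrite eu ev.
Qed.

Lemma invr_csinhB u v :
  (csinh (u - v))^-1 = 2 * cexp u * cexp v / (cexp u ^+ 2 - cexp v ^+ 2).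
Proof. by rewrite csinhB invf_div. Qed.

Lemma ccothB u v : ccoth (u - v) =
  (cexp u ^+ 2 + cexp v ^+ 2) / (cexp u ^+ 2 - cexp v ^+ 2).
Proof.
have eu := cexp_neq0 u; have ev := cexp_neq0 v.
rewrite /ccoth invr_csinhB /ccosh cexpN cexpB mulrA.
by congr (_ / _); field; rewrite eu ev.
Qed.
End ComplexExp.

Lemma char_poly_similar {F : fieldType} {n} {A B P : 'M[F]_n} :
  P \in unitmx -> A *m P = P *m B -> char_poly A = char_poly B.
Proof.
move=> P_unit AP_PB.
have : char_poly_mx A *m map_mx polyC P = map_mx polyC P *m char_poly_mx B.
  by rewrite /char_poly_mx mulmxBl mulmxBr -!map_mxM AP_PB -scalar_mxC.
move/(congr1 determinant); rewrite !det_mulmx det_map_mx mulrC; apply: mulfI.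
by rewrite polyC_eq0 -unitfE -unitmxE.
Qed.

Lemma char_poly_tr (R : comNzRingType) n (A : 'M[R]_n) :
  char_poly A^T = char_poly A.
Proof.
rewrite /char_poly -det_tr; congr (\det _).
by apply/matrixP => i j; rewrite !mxE eq_sym.
Qed.

Lemma char_poly_triu (R : comNzRingType) n (U : 'M[R]_n) :
  (forall i j : 'I_n, (j < i)%N -> U i j = 0) ->
  char_poly U = \prod_(i < n) ('X - (U i i)%:P).
Proof.
move=> U_triu; rewrite -char_poly_tr char_poly_trig.
  by apply: eq_bigr => i _; rewrite mxE.
by apply/is_trig_mxP => i j lt_ij; rewrite mxE U_triu.
Qed.

Lemma geom_sum_exprE (F : fieldType) (u v : F) (d : nat) : u != v ->
  \sum_(i < d) u ^+ i * v ^+ (d - i) = v * (u ^+ d - v ^+ d) / (u - v).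
Proof.
move=> neq_uv; apply: (canRL (mulfK _)); first by rewrite subr_eq0.
have -> : \sum_(i < d) u ^+ i * v ^+ (d - i) =
          v * \sum_(i < d) v ^+ (d.-1 - i) * u ^+ i.
  rewrite mulr_sumr; apply: eq_bigr => i _.
  rewrite mulrA -exprS mulrC; congr (_ * _ ^+ _).
  by case: d i => [|d] [i lt_id] //=; rewrite subSn.
rewrite -mulrA; congr (v * _); apply: oppr_inj.
by rewrite opprB subrXX -mulrN opprB mulrC.
Qed.

Section RationalForm.
Context {F : fieldType} {N : nat} (y : 'I_N -> F).
Let x k := y k ^+ 2.
Hypothesis y_neq0 : forall k, y k != 0.
Hypothesis x_inj : forall j k, j != k -> x j != x k.

Definition Qrat : 'M[F]_N := \matrix_(j, k)
  (if j == k then - \sum_(n < N | n != j) (x j + x n) / (x j - x n)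
   else 2 * y j * y k / (x j - x k)).

Definition scaled_vdm : 'M[F]_N := \matrix_(j, d) (y j * x j ^+ d).

Definition powsum m := \sum_k x k ^+ m.

Definition Qtriu : 'M[F]_N := \matrix_(a, d)
  (if a == d then (2 * d.+1)%:R - 1 - N%:R
   else if (a < d)%N then - (2 * powsum (d - a)) else 0).

Lemma scaled_vdm_unit : scaled_vdm \in unitmx.
Proof.
have -> : scaled_vdm = diag_mx (\row_j y j) *m (Vandermonde N (\row_j x j))^T.
  by apply/matrixP => i j; rewrite mul_diag_mx !mxE.
rewrite unitmx_mul unitmx_tr !unitmxE !unitfE det_diag det_Vandermonde.
apply/andP; split; apply/prodf_neq0 => i _; first by rewrite mxE.
apply/prodf_neq0 => k lt_ik.
by rewrite !mxE subr_eq0 x_inj // -val_eqE /= gtn_eqF.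
Qed.

Lemma Qrat_offdiag_mulE (j k : 'I_N) (d : nat) : k != j ->
  2 * y j * y k / (x j - x k) * (y k * x k ^+ d)
  - (x j + x k) / (x j - x k) * (y j * x j ^+ d)
  = y j * (- x j ^+ d - 2 * \sum_(i < d) x j ^+ i * x k ^+ (d - i)).
Proof.
move=> neq_kj; have neq_x : x j - x k != 0 by rewrite subr_eq0 x_inj // eq_sym.
rewrite geom_sum_exprE ?x_inj 1?eq_sym //.
by rewrite /x in neq_x *; field.
Qed.

Lemma sum_offdiag_geom (j : 'I_N) (d : nat) : (d <= N)%N ->
  \sum_(k < N | k != j) \sum_(i < d) x j ^+ i * x k ^+ (d - i)
  = \sum_(i < d) x j ^+ i * powsum (d - i) - d%:R * x j ^+ d.
Proof.
move=> le_dN; rewrite exchange_big /=.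
have -> : d%:R * x j ^+ d = \sum_(i < d) x j ^+ d.
  by rewrite sumr_const card_ord mulr_natl.
rewrite -sumrB; apply: eq_bigr => i _.
rewrite -mulr_sumr /powsum [in RHS](bigD1 j) //= mulrDr -exprD subnKC.
  by rewrite addrAC subrr add0r.
exact: ltnW.
Qed.

Lemma Qrat_mul_scaled_vdmE (j d : 'I_N) :
  (Qrat *m scaled_vdm) j d = y j * (- (N.-1)%:R * x j ^+ d
     - 2 * (\sum_(i < d) x j ^+ i * powsum (d - i) - d%:R * x j ^+ d)).
Proof.
rewrite mxE (bigD1 j) //= !mxE eqxx.
have -> : \sum_(k < N | k != j) Qrat j k * scaled_vdm k d =
   \sum_(k < N | k != j) 2 * y j * y k / (x j - x k) * (y k * x k ^+ d).
  by apply: eq_bigr => k neq_kj; rewrite !mxE eq_sym (negbTE neq_kj).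
rewrite [in LHS]mulNr mulr_suml -sumrN -big_split /=.
rewrite -(sum_offdiag_geom j d (ltnW (ltn_ord d))).
under eq_bigr => k neq_kj do rewrite addrC Qrat_offdiag_mulE //.
rewrite -[LHS]mulr_sumr big_split /=; congr (y j * (_ + _)).
  by rewrite sumr_const cardC1 card_ord mulNrn mulNr mulr_natl.
by rewrite sumrN mulr_sumr.
Qed.

Lemma scaled_vdm_mul_QtriuE (j d : 'I_N) :
  (scaled_vdm *m Qtriu) j d = y j * (((2 * d.+1)%:R - 1 - N%:R) * x j ^+ d
     - 2 * \sum_(i < d) x j ^+ i * powsum (d - i)).
Proof.
rewrite mxE (bigD1 d) //= !mxE eqxx.
pose G (a : nat) := y j * x j ^+ a * - (2 * powsum (d - a)).
have -> : \sum_(a < N | a != d) scaled_vdm j a * Qtriu a d =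
    \sum_(a < N | (a < d)%N) G a.
  rewrite [LHS]big_mkcond [RHS]big_mkcond; apply: eq_bigr => a _ /=.
  case: eqVneq => [->|neq_ad]; first by rewrite ltnn.
  by rewrite !mxE (negbTE neq_ad); case: ifP; rewrite ?mulr0.
rewrite -(big_ord_widen N G (ltnW (ltn_ord d))).
have -> : \sum_(i < d) G i = - (y j * (2 * \sum_(i < d) x j ^+ i * powsum (d - i))).
  by rewrite 2!mulr_sumr -sumrN; apply: eq_bigr => i _; rewrite /G; ring.
ring.
Qed.

Lemma Qrat_scaled_vdm : Qrat *m scaled_vdm = scaled_vdm *m Qtriu.
Proof.
apply/matrixP => j d; rewrite Qrat_mul_scaled_vdmE scaled_vdm_mul_QtriuE.
have N_pred : N = N.-1.+1 by rewrite prednK // (leq_ltn_trans _ (ltn_ord j)).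
rewrite natrM [d.+1%:R]mulrSr [in N%:R]N_pred [N.-1.+1%:R]mulrSr; ring.
Qed.

Lemma char_poly_Qrat :
  char_poly Qrat = \prod_(j < N) ('X - ((2 * j.+1)%:R - 1 - N%:R)%:P).
Proof.
rewrite (char_poly_similar scaled_vdm_unit Qrat_scaled_vdm) char_poly_triu.
  by apply: eq_bigr => i _; rewrite mxE eqxx.
by move=> i k lt_ki; rewrite mxE -val_eqE gtn_eqF // ltnNge ltnW.
Qed.
End RationalForm.

Lemma Qmat_cexpE (R : realType) (N : nat) (z : 'I_N -> R[i]) :
  Qmat z = Qrat (fun k => cexp (z k)).
Proof.
apply/matrixP => j k; rewrite !mxE; case: (eqVneq j k) => [->|_]; last exact: invr_csinhB.
by congr (- _); apply: eq_bigr => n _; rewrite ccothB.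
Qed.

Theorem corollary4p4 (R : realType) (N : nat) (z : 'I_N -> R[i])
  (hN : (1 <= N)%N)
  (hz : forall j k : 'I_N, j != k -> ~ in_ipiZ (z j - z k)) :
  char_poly (Qmat z) =
  \prod_(j < N) ('X - (((2 * j.+1)%:R - 1 - N%:R : R[i]))%:P).
Proof.
rewrite Qmat_cexpE char_poly_Qrat // => [k|j k neq_jk]; first exact: cexp_neq0.
apply/eqP => eq_sqr; apply: (hz j k neq_jk); apply: cexp_sqr_eq1.
by rewrite cexpB expr_div_n eq_sqr divff // expf_neq0 // cexp_neq0.
Qed.
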